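(* Let $A\in\mathbb{R}^{n\times n}$ and $B\in\mathbb{R}^{m\times m}$, and define $C:=\operatorname{diag}(A,B)\in\mathbb{R}^{(n+m)\times(n+m)}$. Pick $k\in\{1,\dots,n+m\}$, let $r:=\binom{n+m}{k}$, $i_1:=\max\{0,k-n\}$ and $i_2:=\min\{m,k\}$. Then there exists a permutation matrix $P\in\mathbb{R}^{r\times r}$ such that \[ C^{(k)}=P\left(\operatorname{diag}_{i\in\{i_1,\dots,i_2\}}\big(A^{(k-i)}\otimes B^{(i)}\big)\right)P^{-1} \] and \[ C^{[k]}=P\left(\operatorname{diag}_{i\in\{i_1,\dots,i_2\}}\big(A^{[k-i]}\oplus B^{[i]}\big)\right)P^{-1}. \]
   Context: For $M\in\mathbb{R}^{p\times q}$ and $k\le\min\{p,q\}$, the $k$th multiplicative compound $M^{(k)}$ is the $\binom{p}{k}\times\binom{q}{k}$ matrix of all $k\times k$ minors of $M$, rows and columns indexed by increasing $k$-tuples of indices in lexicographic order. For square $M$, the $k$th additive compound is $M^{[k]}:=\frac{d}{dt}(\exp(Mt))^{(k)}\big|_{t=0}$. For square $M$, $M^{(0)}:=1$ and $M^{[0]}:=0$ (as $1\times1$ matrices). $\otimes$ is the Kronecker product, and the Kronecker sum of $X\in\mathbb{R}^{a\times a}$, $Y\in\mathbb{R}^{b\times b}$ is $X\oplus Y:=X\otimes I_b+I_a\otimes Y$. $\operatorname{diag}_{i\in\{i_1,\dots,i_2\}}(M_i)$ denotes the block-diagonal matrix with diagonal blocks $M_{i_1},M_{i_1+1},\dots,M_{i_2}$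 in this order. *)

From HB Require Import structures.
From mathcomp Require Import all_boot all_order all_algebra.
From mathcomp Require Import all_classical all_reals all_analysis.
From mathcomp Require Import zify.
Set Implicit Arguments. Unset Strict Implicit. Unset Printing Implicit Defensive.
Import Order.TTheory GRing.Theory Num.Theory numFieldNormedType.Exports.
Local Open Scope ring_scope.

(* Increasing k-element subsequences of a (sorted) list s, listed in
   lexicographic order.  For s = [:: 0; ...; p-1] these are the increasing
   k-tuples of indices in lexicographic order. *)
Fixpoint ksubs (s : seq nat) (k : nat) : seq (seq nat) :=
  match s, k with
  | _, 0%N => [:: [::]]
  | [::], _.+1 => [::]
  | x :: s', k'.+1 => map (cons x) (ksubs s' k') ++ ksubs s' k
  end.

Definition ktuple (p k a : nat) : seq nat := nth [::] (ksubs (iota 0 p) k) a.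

(* entry of a matrix addressed by natural-number indices (0 out of range) *)
Definition mget (R : nzRingType) p q (M : 'M[R]_(p, q)) (i j : nat) : R :=
  match insub i, insub j with
  | Some i', Some j' => M i' j'
  | _, _ => 0
  end.

Definition mulc (R : comNzRingType) p q (k : nat) (M : 'M[R]_(p, q))
  : 'M[R]_('C(p, k), 'C(q, k)) :=
  \matrix_(a, b) \det (\matrix_(x < k, y < k)
      mget M (nth 0%N (ktuple p k a) x) (nth 0%N (ktuple q k b) y)).

Definition kron (R : nzRingType) a1 a2 b1 b2 (A : 'M[R]_(a1, a2))
  (B : 'M[R]_(b1, b2)) : 'M[R]_(a1 * b1, a2 * b2) :=
  \matrix_(i, j) (mget A (i %/ b1) (j %/ b2) * mget B (i %% b1) (j %% b2)).

Definition ksum (R : nzRingType) a b (X : 'M[R]_a) (Y : 'M[R]_b)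
  : 'M[R]_(a * b) := kron X 1%:M + kron 1%:M Y.

Definition mexp (R : realType) n (M : 'M[R]_n) : 'M[R]_n :=
  \matrix_(i, j) limn (fun N : nat => ((\sum_(l < N) (l`!%:R)^-1 *: M ^+ l) i j : R)).

Definition addc (R : realType) n (k : nat) (M : 'M[R]_n) : 'M[R]_('C(n, k)) :=
  \matrix_(a, b) derive1 (fun t : R => mulc k (mexp (t *: M)) a b) 0.

(* block index range i1 = max(0,k-n), ..., i2 = min(m,k) *)
Definition i1 (n m k : nat) : nat := (k - n)%N.
Definition i2 (n m k : nat) : nat := minn m k.
Definition nblk (n m k : nat) : nat := ((i2 n m k).+1 - i1 n m k)%N.
Definition bsize (n m k : nat) (j : 'I_(nblk n m k)) : nat :=
  ('C(n, k - (i1 n m k + j)) * 'C(m, i1 n m k + j))%N.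
Arguments bsize n m k j : clear implicits.

Section BsizeSum.
Local Open Scope nat_scope.
Lemma bsize_sum n m k : (\sum_j bsize n m k j)%N = 'C(n + m, k).
Proof.
rewrite /bsize /nblk /i2 /i1.
have [Hk|Hk] := leqP k (n + m); last first.
  rewrite bin_small // big1 // => j _; have := ltn_ord j; lia.
set f := fun i => ('C(n, k - i) * 'C(m, i))%N.
rewrite (eq_bigr (fun j : 'I_ _ => f (k - n + j)%N)) //.
rewrite -(big_mkord xpredT (fun j => f (k - n + j)%N)).
have -> : \sum_(0 <= i < (minn m k).+1 - (k - n)) f (k - n + i)%N
   = \sum_(k - n <= i < (minn m k).+1) f i.
  by rewrite -[in RHS](add0n (k - n)) big_addn; apply: eq_bigr => i _; rewrite addnC.
rewrite addnC -binomial.Vandermonde -(big_mkord xpredT (fun j => 'C(m, j) * 'C(n, k - j))%N).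
rewrite [RHS](big_cat_nat _ (n:=k - n)) //=; last lia.
rewrite [X in (_ + X)%N](big_cat_nat _ (m:=k-n) (n:=(minn m k).+1)) //=; try lia.
rewrite [X in _ = (X + _)%N]big1_seq ?add0n; last first.
  move=> i /andP[_]; rewrite mem_index_iota => /andP[_ Hi] /=.
  rewrite [X in (_ * X)%N]bin_small ?muln0 //; lia.
rewrite [X in _ = (_ + X)%N]big1_seq ?addn0; last first.
  move=> i /andP[_]; rewrite mem_index_iota => /andP[Hi Hi2].
  have [Hm|Hm] := leqP i m; last by rewrite /= (bin_small Hm) mul0n.
  rewrite /= [X in (_ * X)%N]bin_small ?muln0 //; lia.
by apply: eq_bigr => i _; rewrite /f mulnC.
Qed.
End BsizeSum.

Definition Dmul (R : comNzRingType) n m k (A : 'M[R]_n) (B : 'M[R]_m)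
  : 'M[R]_(\sum_j bsize n m k j) :=
  \mxdiag_(j < nblk n m k)
     kron (mulc (k - (i1 n m k + j)) A) (mulc (i1 n m k + j) B).

Definition Dadd (R : realType) n m k (A : 'M[R]_n) (B : 'M[R]_m)
  : 'M[R]_(\sum_j bsize n m k j) :=
  \mxdiag_(j < nblk n m k)
     ksum (addc (k - (i1 n m k + j)) A) (addc (i1 n m k + j) B).

From HB Require Import structures.
From mathcomp Require Import all_boot all_order all_algebra.
From mathcomp Require Import all_classical all_reals all_analysis.
From mathcomp Require Import perm zify ring.
Set Implicit Arguments. Unset Strict Implicit. Unset Printing Implicit Defensive.
Import Order.TTheory GRing.Theory Num.Theory numFieldNormedType.Exports.

(* A k-subset S of {0, ..., n+m-1} splits into its part below n, a (k-i)-subset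
   of the rows of A, and its part at or above n, which shifted by n is an
   i-subset of the rows of B.  As C is block diagonal, the minor of C on rows S
   and columns T vanishes unless S and T have the same i, and is then the
   product of the corresponding minors of A and B.  Listing the k-subsets by
   i, then by the ranks of the two parts, is thus a permutation carrying C^(k)
   to the block diagonal of the A^(k-i) ⊗ B^(i).  Since exp(tC) is the block
   diagonal of exp(tA) and exp(tB), the same permutation works for
   (exp(tC))^(k), and the product rule at t = 0, where all compounds of
   exp(0) = I are identities, produces the Kronecker sums A^[k-i] ⊕ B^[i]. *)

Lemma mem_ksubs s k x : (x \in ksubs s k) = subseq x s && (size x == k).
Proof.
elim: s k x => [|y s IH] [|k] [|z x] //=; rewrite ?andbF //; try by rewrite inE.
  by rewrite mem_cat IH andbF orbF; apply/mapP => -[].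
rewrite mem_cat IH eqSS; have [->|zy] := eqVneq z y.
  have cons_inj : injective (cons y) by move=> u v [].
  rewrite (mem_map cons_inj) IH.
  by case: (size x == k); rewrite ?andbF ?andbT //= orb_idr // => /cons_subseq.
suff /negbTE -> : z :: x \notin [seq y :: i | i <- ksubs s k] by [].
by apply/mapP => -[u _ [/eqP]]; rewrite (negbTE zy).
Qed.

Lemma uniq_ksubs s k : uniq s -> uniq (ksubs s k).
Proof.
elim: s k => [|y s IH] [|k] //= /andP[ys us].
rewrite cat_uniq map_inj_uniq ?IH //=; last by move=> u v [].
rewrite andbT; apply/hasPn => x; rewrite mem_ksubs => /andP[xs _]; apply/mapP => -[u _ xu].
by move: ys; rewrite (mem_subseq xs) // xu mem_head.
Qed.

Lemma size_ksubs s k : size (ksubs s k) = 'C(size s, k).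
Proof. by elim: s k => [|x s IH] [|k] //=; rewrite size_cat size_map !IH binS addnC. Qed.

Definition krank p k (x : seq nat) : nat := index x (ksubs (iota 0 p) k).

Section KRank.
Variables p k : nat.

Lemma ktuple_ksubs a : a < 'C(p, k) -> ktuple p k a \in ksubs (iota 0 p) k.
Proof. by move=> ha; rewrite mem_nth // size_ksubs size_iota. Qed.

Lemma ktuple_subseq a : a < 'C(p, k) -> subseq (ktuple p k a) (iota 0 p).
Proof. by move/ktuple_ksubs; rewrite mem_ksubs => /andP[]. Qed.

Lemma size_ktuple a : a < 'C(p, k) -> size (ktuple p k a) = k.
Proof. by move/ktuple_ksubs; rewrite mem_ksubs => /andP[_ /eqP]. Qed.

Lemma mem_ktuple_lt a x : a < 'C(p, k) -> x \in ktuple p k a -> x < p.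
Proof. by move=> /ktuple_subseq /mem_subseq sub /sub; rewrite mem_iota. Qed.

Lemma krank_lt x : x \in ksubs (iota 0 p) k -> krank p k x < 'C(p, k).
Proof. by rewrite -index_mem size_ksubs size_iota. Qed.

Lemma krankK x : x \in ksubs (iota 0 p) k -> ktuple p k (krank p k x) = x.
Proof. exact: nth_index. Qed.

Lemma ktupleK a : a < 'C(p, k) -> krank p k (ktuple p k a) = a.
Proof.
by move=> ha; rewrite /krank index_uniq ?uniq_ksubs ?iota_uniq // size_ksubs size_iota.
Qed.

Lemma ktuple_subset_eq u v : u < 'C(p, k) -> v < 'C(p, k) ->
  {subset ktuple p k u <= ktuple p k v} -> u = v.
Proof.
move=> hu hv uv; rewrite -(ktupleK hu) -(ktupleK hv); congr krank.
have sorted_ktuple w : w < 'C(p, k) -> sorted ltn (ktuple p k w).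
  move=> /ktuple_subseq /subseq_sorted; apply; [exact: ltn_trans | exact: iota_ltn_sorted].
have [_ same] := uniq_min_size (sorted_uniq ltn_trans ltnn (sorted_ktuple _ hu)) uv
  (eq_leq (etrans (size_ktuple hv) (esym (size_ktuple hu)))).
by apply: (irr_sorted_eq ltn_trans ltnn) same; apply: sorted_ktuple.
Qed.

End KRank.

Section LowHigh.
Variable n : nat.

Definition low (S : seq nat) : seq nat := [seq x <- S | x < n].
Definition high (S : seq nat) : seq nat := [seq x - n | x <- S & n <= x].
Definition nhigh (S : seq nat) : nat := count (fun x => n <= x) S.

Lemma size_low S : size (low S) = size S - nhigh S.
Proof.
rewrite /low /nhigh size_filter -(count_predC (fun x => x < n)).
have -> : count (fun x => n <= x) S = count (predC (fun x => x < n)) S.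
  by apply: eq_count => x /=; rewrite -leqNgt.
by rewrite addnK.
Qed.

Lemma size_high S : size (high S) = nhigh S.
Proof. by rewrite size_map size_filter. Qed.

Lemma subseq_iota_split m S : subseq S (iota 0 (n + m)) ->
  [/\ S = low S ++ map (addn n) (high S),
      subseq (low S) (iota 0 n) & subseq (high S) (iota 0 m)].
Proof.
case/subseqP => msk; rewrite size_iota => size_msk ->.
set T1 := mask (take n msk) (iota 0 n); set T2 := mask (drop n msk) (iota 0 m).
have -> : mask msk (iota 0 (n + m)) = T1 ++ map (addn n) T2.
  rewrite iotaD add0n -{1}(cat_take_drop n msk) mask_cat; last first.
    by rewrite size_takel ?size_iota // size_msk leq_addr.
  by rewrite /T2 map_mask -iotaDl addn0.
have T1n : all (fun x => x < n) T1.
  by apply/allP => x /(mem_subseq (mask_subseq _ _)); rewrite mem_iota.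
have lowE : low (T1 ++ map (addn n) T2) = T1.
  rewrite /low filter_cat (all_filterP T1n) -[RHS]cats0; congr (_ ++ _).
  by rewrite filter_map (@eq_filter _ _ pred0) ?filter_pred0 // => x /=; lia.
have highE : high (T1 ++ map (addn n) T2) = T2.
  rewrite /high filter_cat (@eq_in_filter _ _ pred0) ?filter_pred0 /=; last first.
    by move=> x /(allP T1n) /=; lia.
  rewrite filter_map (@eq_filter _ _ predT) ?filter_predT -?map_comp; last first.
    by move=> x; rewrite /= leq_addr.
  by rewrite (@eq_map _ _ _ id) ?map_id // => x /=; rewrite addKn.
by rewrite lowE highE; split; rewrite ?mask_subseq.
Qed.

End LowHigh.

Section KSubsetSplit.
Variables (n m k : nat) (S : seq nat).
Hypothesis S_ksub : S \in ksubs (iota 0 (n + m)) k.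

Let S_sub : subseq S (iota 0 (n + m)).
Proof. by move: S_ksub; rewrite mem_ksubs => /andP[]. Qed.

Let size_S : size S = k.
Proof. by apply/eqP; move: S_ksub; rewrite mem_ksubs => /andP[]. Qed.

Lemma low_ksubs : low n S \in ksubs (iota 0 n) (k - nhigh n S).
Proof.
by have [_ ? _] := subseq_iota_split S_sub; rewrite mem_ksubs size_low size_S eqxx andbT.
Qed.

Lemma high_ksubs : high n S \in ksubs (iota 0 m) (nhigh n S).
Proof. by have [_ _ ?] := subseq_iota_split S_sub; rewrite mem_ksubs size_high eqxx andbT. Qed.

Lemma nhigh_bounds : [/\ nhigh n S <= k, nhigh n S <= m & k - nhigh n S <= n].
Proof.
have [_ /size_subseq lowS /size_subseq highS] := subseq_iota_split S_sub.
move: lowS highS; rewrite size_low size_high !size_iota size_S; split=> //.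
by rewrite -size_S count_size.
Qed.

Lemma ksubs_split : S = low n S ++ map (addn n) (high n S).
Proof. by have [] := subseq_iota_split S_sub. Qed.

Lemma nth_ksubs_split x : x < k ->
  nth 0 S x = if x < k - nhigh n S then nth 0 (low n S) x
              else n + nth 0 (high n S) (x - (k - nhigh n S)).
Proof.
have [hk _ _] := nhigh_bounds.
move=> xk; rewrite {1}ksubs_split nth_cat size_low size_S; case: ifP => // xl.
by rewrite (nth_map 0) // size_high; lia.
Qed.

Lemma nth_ksubs_lt x : x < k -> (nth 0 S x < n) = (x < k - nhigh n S).
Proof.
move=> xk; rewrite nth_ksubs_split //; case: ifP => xl; last by rewrite ltnNge leq_addr.
have : nth 0 (low n S) x \in low n S by rewrite mem_nth // size_low size_S.
by rewrite mem_filter => /andP[].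
Qed.

End KSubsetSplit.

Section BlockPermutation.
Variables n m k : nat.
Local Notation r := 'C(n + m, k).
Local Notation S_ a := (ktuple (n + m) k a).

Definition hcount (a : 'I_r) : nat := nhigh n (S_ a).
Definition lrank (a : 'I_r) : nat := krank n (k - hcount a) (low n (S_ a)).
Definition hrank (a : 'I_r) : nat := krank m (hcount a) (high n (S_ a)).

Let S_ksubs (a : 'I_r) : S_ a \in ksubs (iota 0 (n + m)) k.
Proof. exact: ktuple_ksubs. Qed.

Lemma lrank_lt a : lrank a < 'C(n, k - hcount a).
Proof. exact/krank_lt/low_ksubs. Qed.

Lemma hrank_lt a : hrank a < 'C(m, hcount a).
Proof. exact/krank_lt/high_ksubs. Qed.

Lemma ktuple_lrank a : ktuple n (k - hcount a) (lrank a) = low n (S_ a).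
Proof. exact/krankK/low_ksubs. Qed.

Lemma ktuple_hrank a : ktuple m (hcount a) (hrank a) = high n (S_ a).
Proof. exact/krankK/high_ksubs. Qed.

Lemma ksplit_inj a b :
  hcount a = hcount b -> lrank a = lrank b -> hrank a = hrank b -> a = b.
Proof.
move=> eh el er.
have lowE : low n (S_ a) = low n (S_ b) by rewrite -!ktuple_lrank eh el.
have highE : high n (S_ a) = high n (S_ b) by rewrite -!ktuple_hrank eh er.
apply: val_inj => /=; rewrite -(ktupleK (ltn_ord a)) -(ktupleK (ltn_ord b)).
by rewrite (ksubs_split (S_ksubs a)) (ksubs_split (S_ksubs b)) lowE highE.
Qed.

Lemma hcount_bounds a : [/\ hcount a <= k, hcount a <= m & k - hcount a <= n].
Proof. exact: nhigh_bounds. Qed.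

Lemma block_index_lt a : hcount a - i1 n m k < nblk n m k.
Proof. have [] := hcount_bounds a; rewrite /nblk /i2 /i1; lia. Qed.

Definition block_index a : 'I_(nblk n m k) := Ordinal (block_index_lt a).

Lemma i1_block_index a : i1 n m k + block_index a = hcount a.
Proof. have [] := hcount_bounds a; rewrite /= /i1; lia. Qed.

(* In [kron], this is the row pairing row lrank of A^(k-i) with row hrank of B^(i). *)
Lemma block_offset_lt a : lrank a * 'C(m, hcount a) + hrank a < bsize n m k (block_index a).
Proof.
rewrite /bsize i1_block_index (leq_trans (_ : _ < (lrank a).+1 * 'C(m, hcount a))) //.
  by rewrite mulSn addnC ltn_add2r hrank_lt.
by rewrite leq_mul2r lrank_lt orbT.
Qed.

Definition block_offset a : 'I_(bsize n m k (block_index a)) := Ordinal (block_offset_lt a).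

Definition block_rank a : 'I_r :=
  cast_ord (bsize_sum n m k) (tagnat.Rank (block_index a) (block_offset a)).

Lemma block_rank_inj : injective block_rank.
Proof.
move=> a b /(congr1 val) /= /eqP; rewrite tagnat.eq_Rank => /andP[/eqP ej /eqP ep].
have eh : hcount a = hcount b by rewrite -!i1_block_index ej.
move: ep => /=; rewrite eh => /(congr1 (fun x => (x %/ 'C(m, hcount b), x %% 'C(m, hcount b)))).
have := hrank_lt a; have := hrank_lt b; rewrite eh => hb ha.
rewrite /= !divnMDl ?modnMDl ?divn_small ?modn_small ?addn0 //; try lia.
by case; apply: ksplit_inj.
Qed.

Definition block_perm : 'S_r := perm block_rank_inj.

End BlockPermutation.

Local Open Scope ring_scope.

Section MatrixEntries.
Variable R : nzRingType.

Lemma mgetE p q (M : 'M[R]_(p, q)) (i : 'I_p) (j : 'I_q) : mget M i j = M i j.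
Proof. by rewrite /mget !valK. Qed.

Lemma mget_ord p q (M : 'M[R]_(p, q)) i j (hi : (i < p)%N) (hj : (j < q)%N) :
  mget M i j = M (Ordinal hi) (Ordinal hj).
Proof. by rewrite -mgetE. Qed.

Lemma mget_out p q (M : 'M[R]_(p, q)) i j : ~~ ((i < p) && (j < q))%N -> mget M i j = 0.
Proof.
rewrite negb_and /mget => /orP[h|h]; first by rewrite insubF //; apply/negbTE.
by case: insubP => // *; rewrite insubF //; apply/negbTE.
Qed.

Lemma mget1 p i j : mget (1%:M : 'M[R]_p) i j = ((i == j) && (i < p)%N)%:R.
Proof.
have [hi|hi] := boolP (i < p)%N; last by rewrite mget_out ?(negbTE hi) // andbF.
have [hj|hj] := boolP (j < p)%N; last first.
  by rewrite mget_out ?hi ?andbT //; case: eqP => // e; rewrite -e hi in hj.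
by rewrite (mget_ord _ hi hj) mxE /= andbT.
Qed.

Lemma mget_block_mx p q (X : 'M[R]_p) (Y : 'M[R]_q) u v :
  mget (block_mx X 0 0 Y) u v =
  if (u < p)%N then (if (v < p)%N then mget X u v else 0)
  else if (v < p)%N then 0 else mget Y (u - p) (v - p).
Proof.
have [hu|hu] := boolP (u < p + q)%N; last first.
  rewrite mget_out ?(negbTE hu) //; case: ifP => up; first lia.
  by case: ifP => // _; rewrite mget_out //; lia.
have [hv|hv] := boolP (v < p + q)%N; last first.
  rewrite mget_out ?(negbTE hv) ?andbF //; case: ifP => up; case: ifP => vp //; try lia.
  by rewrite mget_out //; lia.
rewrite (mget_ord _ hu hv).
case: (split_ordP (Ordinal hu)) => u' eu; case: (split_ordP (Ordinal hv)) => v' ev.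
all: rewrite eu ev; move: eu ev => /(congr1 val) /= eu /(congr1 val) /= ev.
all: by rewrite ?eu ?ev ?block_mxEul ?block_mxEur ?block_mxEdl ?block_mxEdr ?mxE ?addKn ?mgetE.
Qed.

Lemma expr_block_diag p q (X : 'M[R]_p) (Y : 'M[R]_q) l :
  (block_mx X 0 0 Y) ^+ l = block_mx (X ^+ l) 0 0 (Y ^+ l).
Proof.
elim: l => [|l IH]; first by rewrite !expr0 -scalar_mx_block.
by rewrite !exprS -!mulmxE IH mulmx_block !mulmx0 !mul0mx !addr0 !add0r.
Qed.

End MatrixEntries.

Definition detfun (R : comNzRingType) k (F : nat -> nat -> R) : R :=
  \det (\matrix_(x < k, y < k) F x y).

Section DetFun.
Variable R : comNzRingType.
Implicit Type F : nat -> nat -> R.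

Lemma eq_detfun k F G :
  (forall x y, (x < k)%N -> (y < k)%N -> F x y = G x y) -> detfun k F = detfun k G.
Proof. by move=> FG; congr (\det _); apply/matrixP => x y; rewrite !mxE FG. Qed.

Lemma detfun_tr k F : detfun k F = detfun k (fun x y => F y x).
Proof. by rewrite /detfun -det_tr; congr (\det _); apply/matrixP => x y; rewrite !mxE. Qed.

Lemma detfun_block_diag p1 p2 F :
  (forall x y, (x < p1 + p2)%N -> (y < p1 + p2)%N -> (x < p1)%N != (y < p1)%N -> F x y = 0) ->
  detfun (p1 + p2) F = detfun p1 F * detfun p2 (fun x y => F (p1 + x)%N (p1 + y)%N).
Proof.
move=> F0; rewrite /detfun -(det_ublock _ 0); congr (\det _); apply/matrixP => x y.
rewrite [LHS]mxE; case: (split_ordP x) => x' ->; case: (split_ordP y) => y' ->.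
all: rewrite ?block_mxEul ?block_mxEur ?block_mxEdl ?block_mxEdr !mxE //=.
all: by have := ltn_ord x'; have := ltn_ord y'; move=> *; apply: F0; lia.
Qed.

(* The first p rows live in the first q < p columns, so they are dependent. *)
Lemma detfun_eq0_narrow k p q F : (q < p)%N -> (p <= k)%N ->
  (forall x y, (x < p)%N -> (q <= y < k)%N -> F x y = 0) -> detfun k F = 0.
Proof.
move=> qp pk F0; rewrite /detfun /determinant big1 // => s _.
have [/forallP small|] := boolP [forall i : 'I_k, (i < p)%N ==> (s i < q)%N].
  have fP (x : 'I_p) : (s (widen_ord pk x) < q)%N by apply: (implyP (small _)); rewrite /= ltn_ord.
  have /leq_card : injective (fun x => Ordinal (fP x)).
    by move=> x y /(congr1 val) /= /val_inj /perm_inj /(congr1 val) /= e; apply: val_inj.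
  by rewrite !card_ord; lia.
rewrite negb_forall => /existsP[i]; rewrite negb_imply -leqNgt => /andP[ip qsi].
by rewrite (bigD1 i) //= mxE F0 ?qsi ?ltn_ord // mul0r mulr0.
Qed.

Lemma detfun_block_eq0 k p p' F : (p <= k)%N -> (p' <= k)%N -> p != p' ->
  (forall x y, (x < k)%N -> (y < k)%N -> (x < p)%N != (y < p')%N -> F x y = 0) ->
  detfun k F = 0.
Proof.
wlog lt : p p' F / (p' < p)%N => [wlog_lt pk p'k neq F0 | pk _ _ F0].
  have [lt|lt|eq] := ltngtP p' p; first exact: (wlog_lt p p' F).
    rewrite detfun_tr; apply: (wlog_lt p' p _ lt p'k pk); first by rewrite eq_sym.
    by move=> x y xk yk ne; apply: F0; rewrite // eq_sym.
  by rewrite eq eqxx in neq.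
apply: (detfun_eq0_narrow lt pk) => x y xp /andP[p'y yk].
by apply: F0; rewrite ?xp ?ltnNge ?p'y //; lia.
Qed.

End DetFun.

Section CompoundEntries.
Variable R : comNzRingType.

Lemma mget_mulc p p' q (M : 'M[R]_(p, p')) u v :
  (u < 'C(p, q))%N -> (v < 'C(p', q))%N ->
  mget (mulc q M) u v =
  detfun q (fun x y => mget M (nth 0%N (ktuple p q u) x) (nth 0%N (ktuple p' q v) y)).
Proof. by move=> hu hv; rewrite (mget_ord _ hu hv) mxE. Qed.

Lemma mulc1 p q : mulc q (1%:M : 'M[R]_p) = 1%:M.
Proof.
apply/matrixP => u v; rewrite -[LHS]mgetE mget_mulc // mxE.
have [<-|neq] := eqVneq u v.
  rewrite (@eq_detfun _ _ _ (fun x y => (x == y)%:R)) /detfun; last first.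
    have uniq_u := subseq_uniq (ktuple_subseq (ltn_ord u)) (iota_uniq 0 p).
    move=> x y xq yq; rewrite mget1 nth_uniq ?size_ktuple //.
    by rewrite (mem_ktuple_lt (ltn_ord u)) ?andbT // mem_nth ?size_ktuple.
  by rewrite (_ : \matrix_(x, y) _ = 1%:M) ?det1 //; apply/matrixP => x y; rewrite !mxE.
have [s su sv] : exists2 s, s \in ktuple p q u & s \notin ktuple p q v.
  apply/hasP; apply: contraNT neq => /hasPn sub; apply/eqP/val_inj.
  apply: (ktuple_subset_eq (ltn_ord u) (ltn_ord v)) => z.
  by move/sub; rewrite negbK.
have xq : (index s (ktuple p q u) < q)%N.
  by rewrite -[X in (_ < X)%N](size_ktuple (ltn_ord u)) index_mem.
rewrite /detfun (expand_det_row _ (Ordinal xq)) big1 // => y _.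
rewrite !mxE mget1 nth_index //; case: eqP => [sy|]; last by rewrite mul0r.
by rewrite sy mem_nth ?size_ktuple in sv.
Qed.

End CompoundEntries.

Section CompoundBlock.
Variables (R : comNzRingType) (n m k : nat).

Lemma mget_block_nth (X : 'M[R]_n) (Y : 'M[R]_m) S T x y :
  S \in ksubs (iota 0 (n + m)) k -> T \in ksubs (iota 0 (n + m)) k ->
  (x < k)%N -> (y < k)%N ->
  let p := (k - nhigh n S)%N in let p' := (k - nhigh n T)%N in
  mget (block_mx X 0 0 Y) (nth 0%N S x) (nth 0%N T y) =
  if (x < p)%N then (if (y < p')%N then mget X (nth 0%N (low n S) x) (nth 0%N (low n T) y) else 0)
  else if (y < p')%N then 0 else mget Y (nth 0%N (high n S) (x - p)) (nth 0%N (high n T) (y - p')).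
Proof.
move=> S_ksub T_ksub xk yk p p'.
rewrite mget_block_mx (nth_ksubs_lt S_ksub xk) (nth_ksubs_lt T_ksub yk).
rewrite (nth_ksubs_split S_ksub xk) (nth_ksubs_split T_ksub yk).
by rewrite /p /p'; case: ltnP => _; case: ltnP => _; rewrite ?addKn.
Qed.

Lemma mulc_block_mx (X : 'M[R]_n) (Y : 'M[R]_m) (a b : 'I_('C(n + m, k))) :
  mulc k (block_mx X 0 0 Y) a b =
  if hcount a == hcount b then
    mget (mulc (k - hcount a) X) (lrank a) (lrank b) *
    mget (mulc (hcount a) Y) (hrank a) (hrank b)
  else 0.
Proof.
have Sa := ktuple_ksubs (ltn_ord a); have Sb := ktuple_ksubs (ltn_ord b).
pose F x y :=
  mget (block_mx X 0 0 Y) (nth 0%N (ktuple (n + m) k a) x) (nth 0%N (ktuple (n + m) k b) y).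
have -> : mulc k (block_mx X 0 0 Y) a b = detfun k F by rewrite mxE.
have Fz x y : (x < k)%N -> (y < k)%N -> (x < k - hcount a)%N != (y < k - hcount b)%N -> F x y = 0.
  by move=> xk yk; rewrite /F mget_block_nth //; do 2 case: ifP.
have [ha _ _] := hcount_bounds a; have [hb _ _] := hcount_bounds b.
have [eh|neh] := eqVneq (hcount a) (hcount b); last first.
  apply: (detfun_block_eq0 (leq_subr _ _) (leq_subr _ _) _ Fz).
  by apply: contra neh => /eqP e; apply/eqP; lia.
have ek : k = (k - hcount a + hcount a)%N by rewrite subnK.
rewrite [in LHS]ek detfun_block_diag -?ek; last first.
  by move=> x y xk yk; rewrite -eh in Fz; apply: Fz.
rewrite (mget_mulc X (lrank_lt a)); last by rewrite eh lrank_lt.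
rewrite (mget_mulc Y (hrank_lt a)); last by rewrite eh hrank_lt.
rewrite !ktuple_lrank !ktuple_hrank eh ktuple_lrank ktuple_hrank -eh.
congr (_ * _); apply: eq_detfun => x y xp yp.
all: rewrite /F mget_block_nth -/(hcount a) -/(hcount b) -?eh //; try lia.
  by rewrite xp yp.
by rewrite !(ltnNge (k - hcount a + _)) !leq_addr !addKn.
Qed.

End CompoundBlock.

Lemma perm_mx_conjE (R : comUnitRingType) r (s : 'S_r) (D : 'M[R]_r) a b :
  (perm_mx s *m D *m invmx (perm_mx s)) a b = D (s a) (s b).
Proof.
have -> : invmx (perm_mx s) = perm_mx (s^-1)%g :> 'M[R]_r.
  have e : perm_mx s *m perm_mx (s^-1)%g = 1%:M :> 'M[R]_r.
    by rewrite -(perm_mxM R s) mulgV perm_mx1.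
  by rewrite -[LHS]mulmx1 -e mulmxA mulVmx ?unitmx_perm // mul1mx.
by rewrite -col_permE -row_permE !mxE.
Qed.

Lemma mxdiag_RankE (V : nmodType) nb (p_ : 'I_nb -> nat) (B_ : forall i, 'M[V]_(p_ i))
    (G : 'I_nb -> nat -> nat -> V) :
  (forall i (x y : 'I_(p_ i)), B_ i x y = G i x y) ->
  forall i i' (x : 'I_(p_ i)) (y : 'I_(p_ i')),
  mxdiag B_ (tagnat.Rank i x) (tagnat.Rank i' y) = if i == i' then G i x y else 0.
Proof.
move=> BG i i' x y; rewrite /mxdiag /mxblock mxE /tagnat.sig1 /tagnat.sig2 !tagnat.rankK /=.
case: eqVneq => [e|ne]; last by rewrite mxE.
by case: i' / e y => y; rewrite conform_mx_id BG.
Qed.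

Section BlockRankEntries.
Variables n m k : nat.

Lemma mxdiag_block_rank (V : nmodType) (B_ : forall j, 'M[V]_(bsize n m k j))
    (G : nat -> nat -> nat -> nat -> nat -> V) :
  (forall j (u v : 'I_(bsize n m k j)), let c := 'C(m, i1 n m k + j) in
     B_ j u v = G (i1 n m k + j) (u %/ c) (v %/ c) (u %% c) (v %% c))%N ->
  forall a b : 'I_('C(n + m, k)),
  castmx (bsize_sum n m k, bsize_sum n m k) (mxdiag B_)
    (block_rank a) (block_rank b) =
  if hcount a == hcount b then G (hcount a) (lrank a) (lrank b) (hrank a) (hrank b) else 0.
Proof.
move=> BG a b; rewrite castmxE !cast_ordK.
rewrite (@mxdiag_RankE _ _ _ _ (fun j u v => let c := 'C(m, i1 n m k + j) in
  G (i1 n m k + j) (u %/ c) (v %/ c) (u %% c) (v %% c))%N BG).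
have -> : (block_index a == block_index b) = (hcount a == hcount b).
  apply/eqP/eqP => e; first by rewrite -!i1_block_index e.
  by apply: val_inj; rewrite /= e.
case: eqVneq => // eh; rewrite i1_block_index /=.
have := hrank_lt a; have := hrank_lt b; rewrite -eh => hb ha.
by rewrite !divnMDl ?modnMDl ?divn_small ?modn_small ?addn0 //; lia.
Qed.

Lemma Dmul_block_rank (R : comNzRingType) (A : 'M[R]_n) (B : 'M[R]_m) a b :
  castmx (bsize_sum n m k, bsize_sum n m k) (Dmul k A B) (block_rank a) (block_rank b) =
  if hcount a == hcount b then
    mget (mulc (k - hcount a) A) (lrank a) (lrank b) *
    mget (mulc (hcount a) B) (hrank a) (hrank b)
  else 0.
Proof.
apply: (@mxdiag_block_rank _ _ (fun i la lb ha hb =>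
  mget (mulc (k - i) A) la lb * mget (mulc i B) ha hb)) => j u v.
by rewrite mxE.
Qed.

Lemma Dadd_block_rank (R : realType) (A : 'M[R]_n) (B : 'M[R]_m) a b :
  castmx (bsize_sum n m k, bsize_sum n m k) (Dadd k A B) (block_rank a) (block_rank b) =
  if hcount a == hcount b then
    mget (addc (k - hcount a) A) (lrank a) (lrank b) * (hrank a == hrank b)%:R +
    (lrank a == lrank b)%:R * mget (addc (hcount a) B) (hrank a) (hrank b)
  else 0.
Proof.
rewrite (@mxdiag_block_rank _ _ (fun i la lb ha hb =>
  mget (addc (k - i) A) la lb * mget (1%:M : 'M[R]_('C(m, i))) ha hb +
  mget (1%:M : 'M[R]_('C(n, k - i))) la lb * mget (addc i B) ha hb)); last first.
  by move=> j u v; rewrite !mxE.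
by rewrite !mget1 lrank_lt hrank_lt !andbT.
Qed.

End BlockRankEntries.

Section MatrixExponential.
Variable R : realType.

Lemma mx_exprZn p (t : R) (M : 'M[R]_p) l : (t *: M) ^+ l = t ^+ l *: M ^+ l.
Proof.
elim: l => [|l IH]; first by rewrite !expr0 scale1r.
by rewrite !exprS -!mulmxE IH -scalemxAl -scalemxAr scalerA.
Qed.

Lemma normr_mx_expr_le p (M : 'M[R]_p) l i j :
  `|(M ^+ l) i j| <= (\sum_i0 \sum_j0 `|M i0 j0|) ^+ l.
Proof.
set b := \sum_i0 \sum_j0 `|M i0 j0|.
have col_le j0 : \sum_i0 `|M i0 j0| <= b.
  by apply: ler_sum => i0 _; rewrite (bigD1 j0) //= lerDl sumr_ge0.
elim: l i j => [|l IH] i j.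
  by rewrite expr0 mxE; case: (i == j); rewrite ?normr1 ?normr0.
rewrite exprSr -mulmxE mxE exprSr (le_trans (ler_norm_sum _ _ _)) //.
apply: (@le_trans _ _ (\sum_k0 b ^+ l * `|M k0 j|)).
  by apply: ler_sum => k0 _; rewrite normrM ler_wpM2r.
by rewrite -mulr_sumr ler_wpM2l // exprn_ge0 // sumr_ge0 // => ? _; apply: sumr_ge0.
Qed.

Section ExpDominated.
Variables (c : R^nat) (D b : R).
Hypotheses (b_ge0 : 0 <= b) (c_le : forall l, `|c l| <= D * (b ^+ l / l`!%:R)).

Lemma exp_dominated_cvg : cvgn (pseries c 1).
Proof.
have D_ge0 : 0 <= D.
  by have := c_le 0; rewrite expr0 fact0 divr1 mulr1; apply: le_trans.
apply: normed_cvg; apply: (@series_le_cvg _ _ (fun l => D * (b ^+ l / l`!%:R))).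
- by move=> l /=.
- by move=> l; rewrite mulr_ge0 // divr_ge0 // exprn_ge0.
- by move=> l /=; rewrite expr1n mulr1.
have -> : (fun l => D * (b ^+ l / l`!%:R)) = D *: exp_coeff b by [].
exact: is_cvg_seriesZ (is_cvg_series_exp_coeff b).
Qed.

Lemma pseries_diffs_exp_dominated l :
  `|pseries_diffs c l| <= (D * b) * (b ^+ l / l`!%:R).
Proof.
rewrite /pseries_diffs normrM ger0_norm // (le_trans (ler_wpM2l _ (c_le l.+1))) //.
suff -> : l.+1%:R * (D * (b ^+ l.+1 / l.+1`!%:R)) = D * b * (b ^+ l / l`!%:R) by [].
rewrite factS natrM exprS; field.
by rewrite nat1r !pnatr_eq0 -lt0n fact_gt0.
Qed.

End ExpDominated.

Lemma mexp_entry_pseries p (M : 'M[R]_p) i j t :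
  mexp (t *: M) i j = limn (pseries (fun l => (M ^+ l) i j / l`!%:R) t).
Proof.
rewrite mxE; congr (limn _); apply/funext => N.
rewrite /pseries /series /= summxE big_mkord; apply: eq_bigr => l _.
by rewrite mxE mx_exprZn mxE; ring.
Qed.

Lemma derivable_mexp_entry p (M : 'M[R]_p) i j :
  derivable (fun t : R => mexp (t *: M) i j) 0 1.
Proof.
set c : R^nat := fun l => (M ^+ l) i j / l`!%:R.
set b := \sum_i0 \sum_j0 `|M i0 j0|.
have b_ge0 : 0 <= b by apply: sumr_ge0 => ? _; apply: sumr_ge0.
have c_le l : `|c l| <= 1 * (b ^+ l / l`!%:R).
  rewrite mul1r /c normrM normfV normr_nat.
  by rewrite ler_pM2r ?invr_gt0 ?ltr0n ?fact_gt0 // normr_mx_expr_le.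
have dc_le := pseries_diffs_exp_dominated c_le.
have := @pseries_snd_diffs R c 1 0 (exp_dominated_cvg b_ge0 c_le)
  (exp_dominated_cvg b_ge0 dc_le)
  (exp_dominated_cvg b_ge0 (pseries_diffs_exp_dominated dc_le)).
rewrite normr0 normr1 ltr01 => /(_ erefl) [+ _].
suff -> : (fun t : R => mexp (t *: M) i j) = (fun t => limn (pseries c t)) by [].
by apply/funext => t; rewrite mexp_entry_pseries.
Qed.

Lemma mexp_block p q (X : 'M[R]_p) (Y : 'M[R]_q) :
  mexp (block_mx X 0 0 Y) = block_mx (mexp X) 0 0 (mexp Y).
Proof.
pose S p (Z : 'M[R]_p) N := \sum_(l < N) (l`!%:R)^-1 *: Z ^+ l.
have S_block N : S _ (block_mx X 0 0 Y) N = block_mx (S _ X N) 0 0 (S _ Y N).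
  elim: N => [|N IH]; first by rewrite /S !big_ord0 block_mx0.
  rewrite /S !big_ord_recr /= -!/(S _ _ N) IH expr_block_diag scale_block_mx.
  by rewrite add_block_mx !scaler0 !addr0.
apply/matrixP => i j; rewrite [LHS]mxE; under eq_fun do rewrite -/(S _ _ _) S_block.
case: (split_ordP i) => i' ->; case: (split_ordP j) => j' ->.
all: under eq_fun do rewrite ?block_mxEul ?block_mxEur ?block_mxEdl ?block_mxEdr ?mxE.
all: by rewrite ?block_mxEul ?block_mxEur ?block_mxEdl ?block_mxEdr ?mxE ?lim_cst.
Qed.

Lemma mexp0 p : mexp (0 : 'M[R]_p) = 1%:M.
Proof.
apply/matrixP => i j; rewrite mxE; apply: cvg_lim => //; rewrite -cvg_shiftS.
rewrite (_ : (fun n => _) = fun=> 1%:M i j); first exact: cvg_cst.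
apply/funext => N /=; rewrite big_ord_recl big1 ?addr0 ?fact0 ?invr1 ?scale1r ?expr0 //.
by move=> l _; rewrite expr0n scaler0.
Qed.

End MatrixExponential.

Section DerivableDet.
Variable R : realType.

Lemma derivable_sumr (I : Type) (r : seq I) (P : pred I) (F : I -> R -> R) x :
  (forall i, derivable (F i) x 1) -> derivable (fun t => \sum_(i <- r | P i) F i t) x 1.
Proof.
move=> dF; elim: r => [|i r IH].
  by under eq_fun do rewrite big_nil; apply: derivable_cst.
under eq_fun do rewrite big_cons.
by case: (P i) => //; apply: derivableD.
Qed.

Lemma derivable_prodr (I : Type) (r : seq I) (P : pred I) (F : I -> R -> R) x :
  (forall i, derivable (F i) x 1) -> derivable (fun t => \prod_(i <- r | P i) F i t) x 1.
Proof.
move=> dF; elim: r => [|i r IH].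
  by under eq_fun do rewrite big_nil; apply: derivable_cst.
under eq_fun do rewrite big_cons.
by case: (P i) => //; apply: derivableM.
Qed.

Lemma derivable_detfun q (G : R -> nat -> nat -> R) x :
  (forall u v, derivable (fun t => G t u v) x 1) -> derivable (fun t => detfun q (G t)) x 1.
Proof.
move=> dG; under eq_fun do rewrite /detfun /determinant.
apply: derivable_sumr => s; under eq_fun do under eq_bigr do rewrite mxE.
by apply: derivableM; [apply: derivable_cst | apply: derivable_prodr].
Qed.

End DerivableDet.

Section AdditiveCompound.
Variable R : realType.

Lemma derivable_mget_mexp p (M : 'M[R]_p) u v :
  derivable (fun t : R => mget (mexp (t *: M)) u v) 0 1.
Proof.
have [/andP[hu hv]|out] := boolP ((u < p) && (v < p))%N.
  by under eq_fun do rewrite (mget_ord _ hu hv); apply: derivable_mexp_entry.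
by under eq_fun do rewrite mget_out //; apply: derivable_cst.
Qed.

Lemma derivable_mulc_mexp p q (M : 'M[R]_p) u v :
  (u < 'C(p, q))%N -> (v < 'C(p, q))%N ->
  derivable (fun t : R => mget (mulc q (mexp (t *: M))) u v) 0 1.
Proof.
move=> hu hv; under eq_fun do rewrite mget_mulc //.
by apply: derivable_detfun => x y; apply: derivable_mget_mexp.
Qed.

Lemma derive_mulc_mexp p q (M : 'M[R]_p) u v :
  (u < 'C(p, q))%N -> (v < 'C(p, q))%N ->
  derive1 (fun t : R => mget (mulc q (mexp (t *: M))) u v) 0 = mget (addc q M) u v.
Proof.
move=> hu hv; rewrite (mget_ord _ hu hv) mxE.
by under eq_fun do rewrite (mget_ord _ hu hv).
Qed.

Lemma mulc_mexp0 p q (M : 'M[R]_p) u v :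
  mget (mulc q (mexp (0 *: M))) u v = ((u == v) && (u < 'C(p, q))%N)%:R.
Proof. by rewrite scale0r mexp0 mulc1 mget1. Qed.

Variables n m k : nat.

Lemma addc_block_mx (X : 'M[R]_n) (Y : 'M[R]_m) (a b : 'I_('C(n + m, k))) :
  addc k (block_mx X 0 0 Y) a b =
  if hcount a == hcount b then
    mget (addc (k - hcount a) X) (lrank a) (lrank b) * (hrank a == hrank b)%:R +
    (lrank a == lrank b)%:R * mget (addc (hcount a) Y) (hrank a) (hrank b)
  else 0.
Proof.
rewrite mxE; under eq_fun do rewrite scale_block_mx !scaler0 mexp_block mulc_block_mx.
case: eqVneq => eh; last by rewrite derive1_cst.
have ha := hrank_lt a; have hb := hrank_lt b; have la := lrank_lt a; have lb := lrank_lt b.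
rewrite -eh in hb lb.
set f := fun t : R => mget (mulc (k - hcount a) (mexp (t *: X))) (lrank a) (lrank b).
set g := fun t : R => mget (mulc (hcount a) (mexp (t *: Y))) (hrank a) (hrank b).
rewrite derive1E (_ : (fun t => _) = f * g) // deriveM; try exact: derivable_mulc_mexp.
rewrite -!derive1E !derive_mulc_mexp // /f /g !mulc_mexp0 la ha !andbT.
by rewrite addrC; congr (_ + _); apply: mulrC.
Qed.

End AdditiveCompound.

Theorem theorem3 (R : realType) (n m : nat) (A : 'M[R]_n) (B : 'M[R]_m)
  (k : nat) (hk1 : (1 <= k)%N) (hk2 : (k <= n + m)%N) :
  let C : 'M[R]_(n + m) := block_mx A 0 0 B in
  exists P : 'M[R]_('C(n + m, k)),
    is_perm_mx P /\
    mulc k C = P *m castmx (bsize_sum n m k, bsize_sum n m k) (Dmul k A B)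
                 *m invmx P /\
    addc k C = P *m castmx (bsize_sum n m k, bsize_sum n m k) (Dadd k A B)
                 *m invmx P.
Proof.
move=> C; exists (perm_mx (block_perm n m k)); split; first exact: perm_mx_is_perm.
split; apply/matrixP => a b; rewrite perm_mx_conjE !permE.
  by rewrite Dmul_block_rank mulc_block_mx.
by rewrite Dadd_block_rank addc_block_mx.
Qed.
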